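(* Let $\Gamma$ be a discrete subgroup of $E(n)$, and let $A=\lambda A'$, where $A'\in O(n)$ and $\lambda>0$. Suppose that $A\Gamma A^{-1}\subset\Gamma$ and $\lambda\le1$. Then $A\Gamma A^{-1}=\Gamma$.
   Context: $E(n)$ denotes the group of isometries of $\mathbb{R}^n$ (maps $x\mapsto Bx+b$, $B\in O(n)$, $b\in\mathbb{R}^n$) with the topology of $O(n)\times\mathbb{R}^n$; discreteness refers to this topology. $A\Gamma A^{-1}=\{A\circ\gamma\circ A^{-1}:\gamma\in\Gamma\}$. *)

From Stdlib Require Import Reals Lra Lia Arith.
Open Scope R_scope.

(* Vectors of R^n are represented as nat -> R (only coordinates < n matter);
   n x n matrices as nat -> nat -> R. *)

Fixpoint rsum (n : nat) (f : nat -> R) : R :=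
  match n with
  | O => 0
  | S m => rsum m f + f m
  end.

Definition matmul (n : nat) (A C : nat -> nat -> R) : nat -> nat -> R :=
  fun i j => rsum n (fun k => A i k * C k j).

Definition mvmul (n : nat) (A : nat -> nat -> R) (v : nat -> R) : nat -> R :=
  fun i => rsum n (fun k => A i k * v k).

Definition transpose (A : nat -> nat -> R) : nat -> nat -> R := fun i j => A j i.

Definition isO (n : nat) (B : nat -> nat -> R) : Prop :=
  (forall i j, (i < n)%nat -> (j < n)%nat ->
      rsum n (fun k => B k i * B k j) = if Nat.eqb i j then 1 else 0) /\
  (forall i j, (n <= i)%nat \/ (n <= j)%nat -> B i j = 0).

(* An element of E(n): the pair (B, b) representing x |-> B x + b,
   with B in O(n) and b in R^n (zero-padded, so the representation is unique). *)
Definition Elt : Type := ((nat -> nat -> R) * (nat -> R))%type.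

Definition isE (n : nat) (g : Elt) : Prop :=
  isO n (fst g) /\ (forall i, (n <= i)%nat -> snd g i = 0).

Definition apply (n : nat) (g : Elt) (x : nat -> R) : nat -> R :=
  fun i => mvmul n (fst g) x i + snd g i.

Definition idE (n : nat) : Elt :=
  (fun i j => if andb (Nat.ltb i n) (Nat.eqb i j) then 1 else 0, fun _ => 0).

Definition compE (n : nat) (g h : Elt) : Elt :=
  (matmul n (fst g) (fst h), fun i => mvmul n (fst g) (snd h) i + snd g i).

Definition invE (n : nat) (g : Elt) : Elt :=
  (transpose (fst g), fun i => - mvmul n (transpose (fst g)) (snd g) i).

Definition subgroupE (n : nat) (Gam : Elt -> Prop) : Prop :=
  (forall g, Gam g -> isE n g) /\
  Gam (idE n) /\
  (forall g h, Gam g -> Gam h -> Gam (compE n g h)) /\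
  (forall g, Gam g -> Gam (invE n g)).

Definition discreteE (n : nat) (Gam : Elt -> Prop) : Prop :=
  forall g, Gam g -> exists eps, 0 < eps /\
    forall h, Gam h ->
      (forall i j, (i < n)%nat -> (j < n)%nat -> Rabs (fst g i j - fst h i j) < eps) ->
      (forall i, (i < n)%nat -> Rabs (snd g i - snd h i) < eps) ->
      h = g.

Definition simA (n : nat) (A' : nat -> nat -> R) (lam : R) (x : nat -> R) : nat -> R :=
  fun i => lam * mvmul n A' x i.

Definition simAinv (n : nat) (A' : nat -> nat -> R) (lam : R) (x : nat -> R) : nat -> R :=
  fun i => / lam * mvmul n (transpose A') x i.

Definition inConj (n : nat) (A' : nat -> nat -> R) (lam : R) (Gam : Elt -> Prop)
    (g : Elt) : Prop :=
  isE n g /\ exists gam, Gam gam /\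
    forall (x : nat -> R) (i : nat), (i < n)%nat ->
      apply n g x i = simA n A' lam (apply n gam (simAinv n A' lam x)) i.

From Stdlib Require Import Reals Lra Lia List FunctionalExtensionality Classical.
From mathcomp Require all_boot all_algebra Rstruct.
Open Scope R_scope.

(* Conjugation phi(gamma) = A gamma A^-1 maps Gam injectively into itself and multiplies
   translation lengths by lam <= 1, so the phi-orbit of any g in Gam has bounded translation
   parts; its rotation parts are bounded anyway.  A bounded sequence in a discrete subgroup of
   E(n) must repeat: two of its terms are close, so left translation by the inverse of one
   puts the other near the identity, where discreteness forces equality.  Hence
   phi^a g = phi^b g for some a < b, and injectivity of phi gives
   g = phi (phi^(b-a-1) g), which lies in A Gam A^-1. *)

Lemma rsum_ext n f g : (forall k, (k < n)%nat -> f k = g k) -> rsum n f = rsum n g.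
Proof.
  induction n as [|n IH]; intros H; simpl; [reflexivity|].
  rewrite IH, H; auto with arith.
Qed.

Lemma rsum_eq0 n f : (forall k, (k < n)%nat -> f k = 0) -> rsum n f = 0.
Proof. intros H. rewrite (rsum_ext n f (fun _ => 0)) by auto. clear H; induction n; simpl; lra. Qed.

Lemma rsum_add n f g : rsum n (fun k => f k + g k) = rsum n f + rsum n g.
Proof. induction n; simpl; lra. Qed.

Lemma rsum_sub n f g : rsum n (fun k => f k - g k) = rsum n f - rsum n g.
Proof. induction n; simpl; lra. Qed.

Lemma rsum_mull n c f : rsum n (fun k => c * f k) = c * rsum n f.
Proof. induction n; simpl; lra. Qed.

Lemma rsum_mulr n c f : rsum n (fun k => f k * c) = rsum n f * c.
Proof. induction n; simpl; lra. Qed.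

Lemma rsum_swap n m f :
  rsum n (fun a => rsum m (fun b => f a b)) = rsum m (fun b => rsum n (fun a => f a b)).
Proof.
  induction n as [|n IH]; simpl.
  - symmetry; apply rsum_eq0; auto.
  - rewrite IH, <- rsum_add; reflexivity.
Qed.

Lemma rsum_kronecker n i f :
  (i < n)%nat -> rsum n (fun k => (if Nat.eqb i k then 1 else 0) * f k) = f i.
Proof.
  induction n as [|n IH]; intros Hi; simpl; [lia|].
  destruct (Nat.eqb_spec i n) as [->|Hne].
  - rewrite rsum_eq0; [lra|]. intros k Hk. destruct (Nat.eqb_spec n k); [lia|lra].
  - rewrite IH by lia. lra.
Qed.

Lemma rsum_ge0 n f : (forall k, (k < n)%nat -> 0 <= f k) -> 0 <= rsum n f.
Proof.
  induction n as [|n IH]; intros H; simpl; [lra|].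
  assert (0 <= f n) by (apply H; lia). assert (0 <= rsum n f) by (apply IH; auto). lra.
Qed.

Lemma rsum_abs_le n f c : (forall k, (k < n)%nat -> Rabs (f k) <= c) -> Rabs (rsum n f) <= INR n * c.
Proof.
  induction n as [|n IH]; intros H; simpl rsum.
  - rewrite Rabs_R0; simpl; lra.
  - rewrite S_INR. eapply Rle_trans; [apply Rabs_triang|].
    assert (Rabs (f n) <= c) by (apply H; lia).
    assert (Rabs (rsum n f) <= INR n * c) by (apply IH; auto). lra.
Qed.

Lemma rsum_bounded_comb_le n c x d :
  (forall k, (k < n)%nat -> Rabs (c k) <= 1) -> (forall k, (k < n)%nat -> Rabs (x k) <= d) ->
  Rabs (rsum n (fun k => c k * x k)) <= INR n * d.
Proof.
  intros Hc Hx. apply rsum_abs_le. intros k Hk. rewrite Rabs_mult.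
  specialize (Hc k Hk). specialize (Hx k Hk). pose proof (Rabs_pos (x k)). nra.
Qed.

Definition sqnorm (n : nat) (v : nat -> R) : R := rsum n (fun k => v k * v k).

Lemma sqnorm_ge0 n v : 0 <= sqnorm n v.
Proof. apply rsum_ge0. intros; nra. Qed.

Lemma sqnorm_ge_sq n v i : (i < n)%nat -> v i * v i <= sqnorm n v.
Proof.
  unfold sqnorm. induction n as [|n IH]; intros Hi; simpl; [lia|].
  destruct (Nat.eq_dec i n) as [->|Hne].
  - pose proof (sqnorm_ge0 n v). unfold sqnorm in *. lra.
  - assert (v i * v i <= rsum n (fun k => v k * v k)) by (apply IH; lia). nra.
Qed.

Lemma Rabs_le_of_sqnorm n v i : (i < n)%nat -> Rabs (v i) <= 1 + sqnorm n v.
Proof.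
  intros Hi. pose proof (sqnorm_ge_sq n v i Hi).
  unfold Rabs; destruct (Rcase_abs (v i)); nra.
Qed.

Definition padded_mx (n : nat) (B : nat -> nat -> R) : Prop :=
  forall i j, (n <= i)%nat \/ (n <= j)%nat -> B i j = 0.

Definition padded_vec (n : nat) (v : nat -> R) : Prop := forall i, (n <= i)%nat -> v i = 0.

(* [idmx n] vanishes outside the n x n block, so identities between padded matrices
   hold at every index, not only on the block. *)
Definition idmx (n : nat) : nat -> nat -> R := fst (idE n).

Lemma idmx_lt n i j : (i < n)%nat -> idmx n i j = if Nat.eqb i j then 1 else 0.
Proof. intros Hi. unfold idmx; simpl. now rewrite (proj2 (Nat.ltb_lt i n) Hi). Qed.

Lemma idmx_ge n i j : (n <= i)%nat -> idmx n i j = 0.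
Proof. intros Hi. unfold idmx; simpl. now rewrite (proj2 (Nat.ltb_ge i n) Hi). Qed.

Lemma matmul_assoc n A B C : matmul n (matmul n A B) C = matmul n A (matmul n B C).
Proof.
  extensionality i; extensionality j; unfold matmul.
  transitivity (rsum n (fun k => rsum n (fun l => A i l * B l k * C k j))).
  - apply rsum_ext; intros k _. rewrite <- rsum_mulr. reflexivity.
  - rewrite rsum_swap. apply rsum_ext; intros l _. rewrite <- rsum_mull.
    apply rsum_ext; intros; ring.
Qed.

Lemma mvmul_matmul n A B v : mvmul n (matmul n A B) v = mvmul n A (mvmul n B v).
Proof. exact (f_equal (fun M i => M i O) (matmul_assoc n A B (fun k _ => v k))). Qed.

Lemma transpose_matmul n A B : transpose (matmul n A B) = matmul n (transpose B) (transpose A).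
Proof. extensionality i; extensionality j. apply rsum_ext; intros; unfold transpose; ring. Qed.

Lemma mvmul_add n A v w i : mvmul n A (fun k => v k + w k) i = mvmul n A v i + mvmul n A w i.
Proof. unfold mvmul. rewrite <- rsum_add. apply rsum_ext; intros; ring. Qed.

Lemma mvmul_sub n A v w i : mvmul n A (fun k => v k - w k) i = mvmul n A v i - mvmul n A w i.
Proof. unfold mvmul. rewrite <- rsum_sub. apply rsum_ext; intros; ring. Qed.

Lemma mvmul_opp n A v i : mvmul n A (fun k => - v k) i = - mvmul n A v i.
Proof. unfold mvmul. induction n as [|n IH]; simpl; [|rewrite IH]; ring. Qed.

Lemma mvmul_scale n A c v i : mvmul n A (fun k => c * v k) i = c * mvmul n A v i.
Proof. unfold mvmul. rewrite <- rsum_mull. apply rsum_ext; intros; ring. Qed.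

Lemma matmul_padded n A B : padded_mx n A -> padded_mx n B -> padded_mx n (matmul n A B).
Proof.
  intros HA HB i j [Hi|Hj]; apply rsum_eq0; intros k Hk.
  - rewrite HA by auto. ring.
  - rewrite HB by auto. ring.
Qed.

Lemma mvmul_padded n A v : padded_mx n A -> padded_vec n (mvmul n A v).
Proof. intros HA i Hi. apply rsum_eq0. intros k _. rewrite HA by auto. ring. Qed.

Lemma matmul_idmx_l n B : padded_mx n B -> matmul n (idmx n) B = B.
Proof.
  intros HB. extensionality i; extensionality j; unfold matmul.
  destruct (Nat.lt_ge_cases i n) as [Hi|Hi].
  - rewrite <- (rsum_kronecker n i (fun k => B k j)) by auto.
    apply rsum_ext; intros k _. now rewrite idmx_lt.
  - rewrite HB by auto. apply rsum_eq0; intros k _. rewrite idmx_ge by auto. ring.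
Qed.

Lemma matmul_idmx_r n B : padded_mx n B -> matmul n B (idmx n) = B.
Proof.
  intros HB. extensionality i; extensionality j; unfold matmul.
  destruct (Nat.lt_ge_cases j n) as [Hj|Hj].
  - rewrite <- (rsum_kronecker n j (fun k => B i k)) by auto.
    apply rsum_ext; intros k Hk. rewrite idmx_lt, Nat.eqb_sym by auto. ring.
  - rewrite HB by auto. apply rsum_eq0; intros k Hk.
    rewrite idmx_lt by auto. destruct (Nat.eqb_spec k j); [lia|ring].
Qed.

Lemma mvmul_idmx n v : padded_vec n v -> mvmul n (idmx n) v = v.
Proof.
  intros Hv. extensionality i; unfold mvmul.
  destruct (Nat.lt_ge_cases i n) as [Hi|Hi].
  - rewrite <- (rsum_kronecker n i v) by auto.
    apply rsum_ext; intros k _. now rewrite idmx_lt.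
  - rewrite Hv by auto. apply rsum_eq0; intros k _. rewrite idmx_ge by auto. ring.
Qed.

Lemma isO_tr_mul n B : isO n B -> matmul n (transpose B) B = idmx n.
Proof.
  intros [Hcols HB]. extensionality i; extensionality j.
  destruct (Nat.lt_ge_cases i n) as [Hi|Hi]; [destruct (Nat.lt_ge_cases j n) as [Hj|Hj]|].
  - rewrite idmx_lt by auto. apply Hcols; auto.
  - rewrite idmx_lt by auto. destruct (Nat.eqb_spec i j); [lia|].
    apply rsum_eq0; intros k _. unfold transpose. rewrite (HB k j) by auto. ring.
  - rewrite idmx_ge by auto. apply rsum_eq0; intros k _. unfold transpose. rewrite (HB k i) by auto. ring.
Qed.

Lemma isO_of_tr_mul n B : padded_mx n B -> matmul n (transpose B) B = idmx n -> isO n B.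
Proof.
  intros HB HBB. split; [|exact HB]. intros i j Hi Hj.
  rewrite <- (idmx_lt n) by auto. now rewrite <- HBB.
Qed.

(* A one-sided inverse of a square matrix is two-sided. *)
Module OrthogonalTranspose.
Import all_boot all_algebra Rstruct GRing.Theory.
Local Open Scope ring_scope.

Lemma rsum_bigop n f : rsum n f = \sum_(k < n) f k.
Proof. by elim: n => [|n IH] /=; rewrite ?big_ord0 // big_ord_recr /= IH. Qed.

Lemma isO_transpose n (B : nat -> nat -> R) : isO n B -> isO n (transpose B).
Proof.
case=> Bcols Bpad; split=> [i j /ltP ltin /ltP ltjn|i j /or_comm]; last exact: Bpad.
pose M : 'M[R]_n := \matrix_(a < n, b < n) B a b.
have entry (a b : 'I_n) : (a == b) = Nat.eqb a b.
  by case: (Nat.eqb_spec a b) => [/ord_inj ->|/eqP/negbTE]; rewrite ?eqxx.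
have MtM : M^T *m M = 1%:M.
  apply/matrixP=> a b; rewrite !mxE (eq_bigr (fun k : 'I_n => B k a * B k b)).
    rewrite -(rsum_bigop n (fun k => B k a * B k b)) Bcols ?entry;
      [by case: Nat.eqb | exact/ltP | exact/ltP].
  by move=> k _; rewrite !mxE.
move/matrixP: (mulmx1C MtM) => /(_ (Ordinal ltin) (Ordinal ltjn)).
rewrite !mxE (eq_bigr (fun k : 'I_n => B i k * B j k)) => [|k _]; last by rewrite !mxE.
rewrite -(rsum_bigop n (fun k => B i k * B j k)) entry => ->.
by case: Nat.eqb.
Qed.

End OrthogonalTranspose.

Lemma isO_mul_tr n B : isO n B -> matmul n B (transpose B) = idmx n.
Proof. intros HB. exact (isO_tr_mul n (transpose B) (OrthogonalTranspose.isO_transpose n B HB)). Qed.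

Lemma isO_mul n A B : isO n A -> isO n B -> isO n (matmul n A B).
Proof.
  intros HA HB. pose proof HA as [_ HA0]. pose proof HB as [_ HB0].
  apply isO_of_tr_mul; [now apply matmul_padded|].
  rewrite transpose_matmul, matmul_assoc, <- (matmul_assoc n (transpose A)).
  rewrite isO_tr_mul, matmul_idmx_l by auto. now apply isO_tr_mul.
Qed.

Lemma isO_entry_le1 n B i j : isO n B -> (i < n)%nat -> (j < n)%nat -> Rabs (B i j) <= 1.
Proof.
  intros [Hcols _] Hi Hj. pose proof (sqnorm_ge_sq n (fun k => B k j) i Hi) as Hsq.
  unfold sqnorm in Hsq; simpl in Hsq. rewrite Hcols, Nat.eqb_refl in Hsq by auto.
  unfold Rabs; destruct (Rcase_abs (B i j)); nra.
Qed.

Lemma rsum_mvmul_transpose n A v w :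
  rsum n (fun i => mvmul n A v i * w i) = rsum n (fun k => v k * mvmul n (transpose A) w k).
Proof.
  unfold mvmul, transpose.
  transitivity (rsum n (fun i => rsum n (fun k => A i k * v k * w i))).
  - apply rsum_ext; intros. rewrite <- rsum_mulr. reflexivity.
  - rewrite rsum_swap. apply rsum_ext; intros. rewrite <- rsum_mull. apply rsum_ext; intros; ring.
Qed.

Lemma sqnorm_isO n A v : isO n A -> padded_vec n v -> sqnorm n (mvmul n A v) = sqnorm n v.
Proof.
  intros HA Hv. unfold sqnorm.
  rewrite rsum_mvmul_transpose, <- mvmul_matmul, isO_tr_mul, mvmul_idmx by auto.
  reflexivity.
Qed.

Lemma compE_invE_l n u : isE n u -> compE n (invE n u) u = idE n.
Proof.
  destruct u as [U a]; intros [HU _]; unfold compE, invE, idE; simpl; f_equal.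
  - exact (isO_tr_mul n U HU).
  - extensionality i; ring.
Qed.

Lemma compE_idE_r n u : isE n u -> compE n u (idE n) = u.
Proof.
  destruct u as [U a]; intros [[_ HU0] _]; unfold compE, idE; simpl; f_equal.
  - exact (matmul_idmx_r n U HU0).
  - extensionality i. unfold mvmul. rewrite rsum_eq0 by (intros; ring). ring.
Qed.

Lemma compE_K n u v : isE n u -> isE n v -> compE n u (compE n (invE n u) v) = v.
Proof.
  destruct u as [U a], v as [V b]; intros [HU Ha] [[_ HV0] Hb]; unfold compE, invE; simpl; f_equal.
  - rewrite <- matmul_assoc, isO_mul_tr by auto. now apply matmul_idmx_l.
  - extensionality i. rewrite mvmul_add, mvmul_opp, <- !mvmul_matmul, isO_mul_tr, !mvmul_idmx by auto.
    ring.
Qed.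

Definition conjE (n : nat) (A : nat -> nat -> R) (lam : R) (y : Elt) : Elt :=
  (matmul n (matmul n A (fst y)) (transpose A), fun i => lam * mvmul n A (snd y) i).

Definition unconjE (n : nat) (A : nat -> nat -> R) (lam : R) (y : Elt) : Elt :=
  (matmul n (matmul n (transpose A) (fst y)) A, fun i => / lam * mvmul n (transpose A) (snd y) i).

Lemma apply_conjE n A lam y x i : lam <> 0 ->
  apply n (conjE n A lam y) x i = simA n A lam (apply n y (simAinv n A lam x)) i.
Proof.
  intros Hlam. unfold apply, simA, simAinv, conjE; simpl.
  rewrite mvmul_add, <- !mvmul_matmul.
  replace (mvmul n (fst y) (fun k => / lam * mvmul n (transpose A) x k))
    with (fun k => / lam * mvmul n (matmul n (fst y) (transpose A)) x k)
    by (extensionality k; now rewrite mvmul_scale, mvmul_matmul).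
  rewrite mvmul_scale, <- mvmul_matmul, matmul_assoc. field. exact Hlam.
Qed.

Lemma isE_conjE n A lam y : isO n A -> isE n y -> isE n (conjE n A lam y).
Proof.
  intros HA [HY Hb]. split.
  - apply isO_mul; [now apply isO_mul|]. now apply OrthogonalTranspose.isO_transpose.
  - intros i Hi; simpl. rewrite (mvmul_padded n A (snd y) (proj2 HA)) by auto. ring.
Qed.

Lemma unconjE_conjE n A lam y : isO n A -> lam <> 0 -> isE n y -> unconjE n A lam (conjE n A lam y) = y.
Proof.
  destruct y as [Y b]; intros HA Hlam [[_ HY0] Hb]; unfold unconjE, conjE; simpl; f_equal.
  - rewrite !matmul_assoc, isO_tr_mul, matmul_idmx_r by auto.
    rewrite <- matmul_assoc, isO_tr_mul by auto. now apply matmul_idmx_l.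
  - extensionality i. rewrite mvmul_scale, <- mvmul_matmul, isO_tr_mul, mvmul_idmx by auto.
    field. exact Hlam.
Qed.

Lemma conjE_inj n A lam y z : isO n A -> lam <> 0 -> isE n y -> isE n z ->
  conjE n A lam y = conjE n A lam z -> y = z.
Proof.
  intros HA Hlam Hy Hz E.
  now rewrite <- (unconjE_conjE n A lam y), <- (unconjE_conjE n A lam z), E.
Qed.

Lemma sqnorm_conjE n A lam y : isO n A -> isE n y ->
  sqnorm n (snd (conjE n A lam y)) = lam * lam * sqnorm n (snd y).
Proof.
  intros HA [_ Hb]. rewrite <- (sqnorm_isO n A (snd y)) by auto.
  unfold sqnorm; simpl. rewrite <- rsum_mull. apply rsum_ext; intros; ring.
Qed.

Definition near (n : nat) (d : R) (u v : Elt) : Prop :=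
  (forall i j, (i < n)%nat -> (j < n)%nat -> Rabs (fst u i j - fst v i j) <= d) /\
  (forall i, (i < n)%nat -> Rabs (snd u i - snd v i) <= d).

Lemma near_compE_l n d g v w : isE n g -> near n d v w ->
  near n (INR n * d) (compE n g v) (compE n g w).
Proof.
  intros [HG _] [Hmx Hvec]. split.
  - intros i j Hi Hj; simpl; unfold matmul. rewrite <- rsum_sub.
    rewrite (rsum_ext n _ (fun k => fst g i k * (fst v k j - fst w k j))) by (intros; ring).
    apply rsum_bounded_comb_le; intros k Hk; [now apply (isO_entry_le1 n)|auto].
  - intros i Hi; simpl.
    replace (mvmul n (fst g) (snd v) i + snd g i - (mvmul n (fst g) (snd w) i + snd g i))
      with (mvmul n (fst g) (fun k => snd v k - snd w k) i) by (rewrite mvmul_sub; ring).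
    apply rsum_bounded_comb_le; intros k Hk; [now apply (isO_entry_le1 n)|auto].
Qed.

Lemma discreteE_near_eq n Gam : subgroupE n Gam -> discreteE n Gam ->
  exists d, 0 < d /\ forall u v, Gam u -> Gam v -> near n d u v -> u = v.
Proof.
  intros (HE & Hid & Hcomp & Hinv) Hdisc.
  destruct (Hdisc (idE n) Hid) as (eps & Heps & Hiso).
  pose proof (pos_INR n) as Hn.
  assert (Hd : 0 < eps / (INR n + 1)) by (apply Rdiv_lt_0_compat; lra).
  assert (Hsmall : INR n * (eps / (INR n + 1)) < eps).
  { replace (INR n * (eps / (INR n + 1))) with (eps - eps / (INR n + 1)) by (field; lra). lra. }
  exists (eps / (INR n + 1)); split; [exact Hd|].
  intros u v Hu Hv Huv.
  assert (Hw : compE n (invE n u) v = idE n).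
  { pose proof (near_compE_l n _ (invE n u) u v (HE _ (Hinv u Hu)) Huv) as [Hmx Hvec].
    rewrite compE_invE_l in Hmx, Hvec by auto.
    apply Hiso; [apply Hcomp; auto|..].
    - intros i j Hi Hj. eapply Rle_lt_trans; [apply Hmx|]; auto.
    - intros i Hi. eapply Rle_lt_trans; [apply Hvec|]; auto. }
  rewrite <- (compE_K n u v), Hw by auto. symmetry; apply compE_idE_r; auto.
Qed.

Definition infinitely_often (P : nat -> Prop) : Prop := forall N, exists k, (N <= k)%nat /\ P k.

Lemma infinitely_often_halve (f : nat -> R) P lo w :
  infinitely_often P -> (forall k, P k -> lo <= f k <= lo + w) ->
  exists lo' P', infinitely_often P' /\ (forall k, P' k -> P k) /\
    (forall k, P' k -> lo' <= f k <= lo' + w / 2).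
Proof.
  intros HP Hf.
  destruct (classic (infinitely_often (fun k => P k /\ f k <= lo + w / 2))) as [Hlow|Hlow].
  - exists lo, (fun k => P k /\ f k <= lo + w / 2); split; [exact Hlow|split].
    + now intros k [Hk _].
    + intros k [Hk Hfk]. specialize (Hf k Hk). lra.
  - apply not_all_ex_not in Hlow as [N HN].
    exists (lo + w / 2), (fun k => P k /\ (N <= k)%nat); split; [|split].
    + intros M. destruct (HP (Nat.max N M)) as (k & Hk & HPk).
      exists k; split; [|split]; auto; lia.
    + now intros k [Hk _].
    + intros k [Hk HNk]. specialize (Hf k Hk).
      assert (~ f k <= lo + w / 2) by (intros Hfk; apply HN; now exists k). lra.
Qed.

Lemma infinitely_often_bisect (f : nat -> R) m : forall P lo w,
  infinitely_often P -> (forall k, P k -> lo <= f k <= lo + w) ->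
  exists lo' P', infinitely_often P' /\ (forall k, P' k -> P k) /\
    (forall k, P' k -> lo' <= f k <= lo' + w / 2 ^ m).
Proof.
  induction m as [|m IH]; intros P lo w HP Hf.
  - exists lo, P. split; [exact HP|split; [auto|]]. intros k Hk. simpl. rewrite Rdiv_1_r. auto.
  - destruct (infinitely_often_halve f P lo w HP Hf) as (lo1 & P1 & HP1 & Hsub1 & Hf1).
    destruct (IH P1 lo1 (w / 2) HP1 Hf1) as (lo' & P' & HP' & Hsub' & Hf').
    exists lo', P'. split; [exact HP'|split; [auto|]].
    intros k Hk. replace (w / 2 ^ S m) with (w / 2 / 2 ^ m); [auto|].
    simpl. field. apply pow_nonzero. lra.
Qed.

Lemma div_pow2_lt a d : 0 < d -> exists m, a / 2 ^ m < d.
Proof.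
  intros Hd. destruct (Rle_lt_dec a 0) as [Ha|Ha].
  - exists 0%nat. simpl. lra.
  - destruct (pow_lt_1_zero (/ 2) ltac:(rewrite Rabs_pos_eq; lra) (d / a)) as [m Hm].
    { now apply Rdiv_lt_0_compat. }
    exists m. specialize (Hm m (le_n m)).
    rewrite Rabs_pos_eq in Hm by (apply pow_le; lra).
    unfold Rdiv. rewrite <- pow_inv.
    apply (Rmult_lt_compat_l a) in Hm; [|exact Ha].
    replace (a * (d / a)) with d in Hm by (field; lra). exact Hm.
Qed.

Lemma infinitely_often_cluster (f : nat -> R) P M d :
  0 < d -> infinitely_often P -> (forall k, P k -> Rabs (f k) <= M) ->
  exists P', infinitely_often P' /\ (forall k, P' k -> P k) /\
    (forall k l, P' k -> P' l -> Rabs (f k - f l) < d).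
Proof.
  intros Hd HP Hf.
  destruct (div_pow2_lt (2 * M) d Hd) as [m Hm].
  destruct (infinitely_often_bisect f m P (- M) (2 * M) HP) as (lo & P' & HP' & Hsub & Hlo).
  { intros k Hk. specialize (Hf k Hk). unfold Rabs in Hf; destruct (Rcase_abs (f k)); lra. }
  exists P'. split; [exact HP'|split; [exact Hsub|]].
  intros k l Hk Hl. specialize (Hlo k Hk) as Hk'. specialize (Hlo l Hl) as Hl'.
  apply Rabs_def1; lra.
Qed.

Lemma infinitely_often_cluster_list {C : Type} (cs : list C) (F : C -> nat -> R) P M d :
  0 < d -> infinitely_often P -> (forall c k, In c cs -> P k -> Rabs (F c k) <= M) ->
  exists P', infinitely_often P' /\ (forall k, P' k -> P k) /\
    (forall c k l, In c cs -> P' k -> P' l -> Rabs (F c k - F c l) < d).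
Proof.
  intros Hd. revert P. induction cs as [|c cs IH]; intros P HP HF.
  - exists P. split; [exact HP|split; [auto|]]. intros c k l [].
  - destruct (infinitely_often_cluster (F c) P M d Hd HP) as (P1 & HP1 & Hsub1 & Hc).
    { intros k Hk. apply HF; simpl; auto. }
    destruct (IH P1 HP1) as (P' & HP' & Hsub' & Hcs).
    { intros c' k Hc' Hk. apply HF; simpl; auto. }
    exists P'. split; [exact HP'|split; [auto|]].
    intros c' k l [<-|Hc'] Hk Hl; auto.
Qed.

Lemma discreteE_bounded_seq_repeats n Gam (x : nat -> Elt) M :
  subgroupE n Gam -> discreteE n Gam -> (forall k, Gam (x k)) ->
  (forall k, sqnorm n (snd (x k)) <= M) ->
  exists a b, (a < b)%nat /\ x a = x b.
Proof.
  intros Hsub Hdisc Hx HM. pose proof Hsub as [HE _].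
  destruct (discreteE_near_eq n Gam Hsub Hdisc) as (d & Hd & Hnear).
  destruct (infinitely_often_cluster_list (list_prod (seq 0 n) (seq 0 n))
              (fun c k => fst (x k) (fst c) (snd c)) (fun _ => True) 1 d Hd)
    as (P1 & HP1 & _ & Hmx).
  { intros N. now exists N. }
  { intros [i j] k Hij _. apply in_prod_iff in Hij as [Hi Hj]. apply in_seq in Hi, Hj.
    simpl; apply (isO_entry_le1 n); [exact (proj1 (HE _ (Hx k)))|lia|lia]. }
  destruct (infinitely_often_cluster_list (seq 0 n) (fun i k => snd (x k) i) P1 (1 + M) d Hd HP1)
    as (P2 & HP2 & HP21 & Hvec).
  { intros i k Hi _. apply in_seq in Hi.
    eapply Rle_trans; [apply (Rabs_le_of_sqnorm n); lia|]. specialize (HM k). lra. }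
  destruct (HP2 0%nat) as (a & _ & Ha). destruct (HP2 (S a)) as (b & Hab & Hb).
  exists a, b. split; [lia|]. apply Hnear; auto. split.
  - intros i j Hi Hj. apply Rlt_le.
    apply (Hmx (i, j)); auto. apply in_prod_iff; split; apply in_seq; lia.
  - intros i Hi. apply Rlt_le. apply Hvec; auto. apply in_seq; lia.
Qed.

Lemma iter_repeat_in_image {T : Type} (f : T -> T) (S : T -> Prop) g a b :
  (forall y, S y -> S (f y)) -> (forall y z, S y -> S z -> f y = f z -> y = z) ->
  S g -> (a < b)%nat -> Nat.iter a f g = Nat.iter b f g -> exists y, S y /\ f y = g.
Proof.
  intros Hstable Hinj Hg Hab Hrep.
  assert (Horbit : forall k, S (Nat.iter k f g)) by (induction k; simpl; auto).
  destruct b as [|m]; [lia|].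
  replace m with (a + (m - a))%nat in Hrep by lia.
  exists (Nat.iter (m - a) f g). split; [auto|].
  revert Hrep. generalize (m - a)%nat as p. clear Hab.
  induction a as [|a IH]; intros p Hrep; [now symmetry|].
  apply IH, Hinj; auto.
Qed.

Theorem mainTheorem12 (n : nat) (Gam : Elt -> Prop) (A' : nat -> nat -> R) (lam : R) :
  subgroupE n Gam ->
  discreteE n Gam ->
  isO n A' ->
  0 < lam ->
  (forall g, inConj n A' lam Gam g -> Gam g) ->
  lam <= 1 ->
  forall g, inConj n A' lam Gam g <-> Gam g.
Proof.
  intros Hsub Hdisc HA Hlam Hclosed Hle g. split; [apply Hclosed|intros Hg].
  pose proof Hsub as [HE _].
  set (phi := conjE n A' lam).
  assert (Hconj : forall y, Gam y -> inConj n A' lam Gam (phi y)).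
  { intros y Hy. split; [now apply isE_conjE, HE|].
    exists y. split; [exact Hy|]. intros x i _. apply apply_conjE. lra. }
  assert (Horbit : forall k, Gam (Nat.iter k phi g)) by (induction k; simpl; auto).
  assert (Hbound : forall k, sqnorm n (snd (Nat.iter k phi g)) <= sqnorm n (snd g)).
  { induction k as [|k IH]; [simpl; lra|].
    change (sqnorm n (snd (conjE n A' lam (Nat.iter k phi g))) <= sqnorm n (snd g)).
    rewrite sqnorm_conjE by auto.
    assert (lam * lam <= 1) by nra. pose proof (sqnorm_ge0 n (snd (Nat.iter k phi g))). nra. }
  destruct (discreteE_bounded_seq_repeats n Gam _ _ Hsub Hdisc Horbit Hbound) as (a & b & Hab & Hrep).
  destruct (iter_repeat_in_image phi Gam g a b) as (y & Hy & <-); auto.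
  - intros y z Hy Hz. apply conjE_inj; auto. lra.
Qed.
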